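(* Let $d\ge 1$, $k\ge 1$, $m\ge 1$ and $n>k$ be integers. Let $C\subseteq\mathbb{R}^d$ be a set containing a line segment between two distinct points. Let $f:(\mathbb{R}^d)^k\to\mathbb{R}^m$ be a continuous piecewise linear (CPwL) function, and let $F:(\mathbb{R}^d)^n\to\mathbb{R}^m$ be its $k$-ary Janossy pooling, \[F(\mathbf{x}_1,\dots,\mathbf{x}_n)=\frac{1}{(n-k)!}\sum_{\pi\in S_n} f\big(\mathbf{x}_{\pi(1)},\dots,\mathbf{x}_{\pi(k)}\big).\] Then $F$, viewed as a function on the multiset space $\mathcal{M}_n(C)$, is not injective; that is, there exist two distinct multisets $\{\mathbf{w}_1,\dots,\mathbf{w}_n\}\neq\{\mathbf{w}'_1,\dots,\mathbf{w}'_n\}$ of $n$ elements of $C$ with $F(\mathbf{w}_1,\dots,\mathbf{w}_n)=F(\mathbf{w}'_1,\dots,\mathbf{w}'_n)$.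
   Context: A (closed, convex) polytope in $\mathbb{R}^N$ is a set of the form $\{\mathbf{x}\in\mathbb{R}^N : \mathbf{a}_j\cdot\mathbf{x}+b_j\ge 0,\ j=1,\dots,J\}$ for finitely many $\mathbf{a}_j\in\mathbb{R}^N$, $b_j\in\mathbb{R}$ (not necessarily bounded). A partition of $\mathbb{R}^N$ is a finite collection of polytopes with nonempty interior whose union is $\mathbb{R}^N$ and whose interiors are pairwise disjoint. A function $f:\mathbb{R}^N\to\mathbb{R}^m$ is continuous piecewise linear (CPwL) if it is continuous and there is a partition of $\mathbb{R}^N$ such that the restriction of $f$ to each polytope of the partition is affine. Here $(\mathbb{R}^d)^k$ is identified with $\mathbb{R}^{dk}$. $S_n$ is the symmetric group on $\{1,\dots,n\}$. $\mathcal{M}_n(C)$ denotes the set of multisets of cardinality $n$ (unordered, repetitions allowed) with elements in $C$; a permutation-invariant function on $C^n$ is identified with a function on $\mathcal{M}_n(C)$, and $F$ as defined is permutation invariant. *)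

From HB Require Import structures.
From mathcomp Require Import all_boot all_order all_algebra all_fingroup.
From mathcomp Require Import all_classical all_reals all_analysis.
Set Implicit Arguments. Unset Strict Implicit. Unset Printing Implicit Defensive.
Import Order.TTheory GRing.Theory Num.Theory.
Import numFieldNormedType.Exports.
Local Open Scope classical_set_scope.
Local Open Scope ring_scope.

Definition polytope (R : realType) (N : nat) (P : set 'rV[R]_N) : Prop :=
  exists (J : nat) (a : 'I_J -> 'rV[R]_N) (b : 'I_J -> R),
    P = [set x | forall j : 'I_J, 0 <= \sum_(i < N) a j 0 i * x 0 i + b j].

Definition is_partition (R : realType) (N : nat) (p : nat)
    (P : 'I_p -> set 'rV[R]_N) : Prop :=
  [/\ forall i, polytope (P i),
      forall i, interior (P i) !=set0,
      \bigcup_(i in [set: 'I_p]) P i = [set: 'rV[R]_N] &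
      forall i j, i != j -> interior (P i) `&` interior (P j) = set0].

Definition affine_on (R : realType) (N m : nat) (f : 'rV[R]_N -> 'rV[R]_m)
    (S : set 'rV[R]_N) : Prop :=
  exists (A : 'M[R]_(N, m)) (c : 'rV[R]_m), forall x, S x -> f x = x *m A + c.

Definition CPwL (R : realType) (N m : nat) (f : 'rV[R]_N -> 'rV[R]_m) : Prop :=
  continuous f /\
  exists (p : nat) (P : 'I_p -> set 'rV[R]_N),
    is_partition P /\ forall i, affine_on f (P i).

(* An n-tuple (x_1,..,x_n) of points of R^d is the
   matrix X : 'M_(n,d) whose i-th row is x_i; a k-tuple of points of R^d is
   identified with a vector of R^(k*d) via mxvec (row-major concatenation). *)
Definition janossy (R : realType) (d k n m : nat) (hkn : (k <= n)%N)
    (f : 'rV[R]_(k * d) -> 'rV[R]_m) (X : 'M[R]_(n, d)) : 'rV[R]_m :=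
  ((n - k)`!%:R)^-1 *:
    \sum_(s : 'S_n) f (mxvec (\matrix_(i < k, j < d) X (s (widen_ord hkn i)) j)).

Definition rows_seq (R : realType) (n d : nat) (X : 'M[R]_(n, d)) : seq 'rV[R]_d :=
  [seq row i X | i <- enum 'I_n].

(* On a segment [a, b] a configuration is given by parameters y_0, ..., y_(n-1) in (0, 1).
   When they are K-separated (y_(l+1) > K y_l with K large), an affine form in a k-subtuple
   y_(s 1), ..., y_(s k) has the sign of its constant term or, if that vanishes, of the
   coefficient of the largest index.  Hence the affine piece of f containing each term of the
   Janossy sum depends only on the relative order of s 1, ..., s k.  Separation survives a small
   perturbation y + h, which therefore changes F by a linear form in h; grouping permutations by
   order pattern, this form factors through the k sums over k-subsets S of h at the j-th
   smallest element of S.  As n > k these sums have a common nonzero zero h, and the increasing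
   sequences y and y + h give distinct multisets with the same image. *)

From HB Require Import structures.
From mathcomp Require Import all_boot all_order all_algebra all_fingroup.
From mathcomp Require Import all_classical all_reals all_analysis.
From mathcomp Require Import ring lra.
Import Order.TTheory GRing.Theory Num.Theory.
Import numFieldNormedType.Exports.
Local Open Scope classical_set_scope.
Local Open Scope ring_scope.

Set Implicit Arguments. Unset Strict Implicit. Unset Printing Implicit Defensive.

Section Separated.
Variable R : realFieldType.

Definition separated (n : nat) (K : R) (x : nat -> R) : Prop :=
  [/\ 0 < x 0%N, forall l, (l.+1 < n)%N -> K * x l < x l.+1 & K * x n.-1 < 1].

Variables (n : nat) (K : R) (x : nat -> R).
Hypotheses (K_ge1 : 1 <= K) (x_sep : separated n K x).

Let K_gt0 : 0 < K. Proof. exact: lt_le_trans K_ge1. Qed.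

Lemma separated_gt0 l : (l < n)%N -> 0 < x l.
Proof.
case: x_sep => x0_gt0 x_step _; elim: l => // l IHl ltln.
by apply: lt_trans (x_step l ltln); rewrite mulr_gt0 ?IHl 1?ltnW.
Qed.

Lemma separated_le_mulK l : (l < n)%N -> x l <= K * x l.
Proof. by move=> ltln; rewrite ler_peMl // ltW // separated_gt0. Qed.

Lemma separated_lt a b : (a < b)%N -> (b < n)%N -> K * x a < x b.
Proof.
case: x_sep => _ x_step _; elim: b => // b IHb; rewrite ltnS leq_eqVlt.
case/predU1P => [-> | ltab] ltbn; first exact: x_step.
have := IHb ltab (ltnW ltbn); have := separated_le_mulK (ltnW ltbn).
have := x_step b ltbn; lra.
Qed.

Lemma separated_increasing a b : (a < b)%N -> (b < n)%N -> x a < x b.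
Proof.
move=> ltab ltbn; apply: le_lt_trans (separated_lt ltab ltbn).
exact/separated_le_mulK/(ltn_trans ltab).
Qed.

Lemma separated_le_last l : (l < n)%N -> x l <= x n.-1.
Proof.
move=> ltln; have n_gt0 : (0 < n)%N by apply: leq_ltn_trans ltln.
have := ltln; rewrite -{1}(prednK n_gt0) ltnS leq_eqVlt => /predU1P[-> // | ltl].
by apply/ltW/separated_increasing; rewrite // prednK.
Qed.

Lemma separated_le1 l : (l < n)%N -> x l <= 1.
Proof.
move=> ltln; have n_gt0 : (0 < n)%N by apply: leq_ltn_trans ltln.
have ltn1n : (n.-1 < n)%N by rewrite ltn_predL.
have := separated_le_mulK ltn1n; have := separated_le_last ltln.
by case: x_sep => _ _; have := K_ge1; lra.
Qed.

End Separated.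

Section Sorting.
Variables (k n : nat).

Definition same_order (iota iota' : 'I_k -> 'I_n) : Prop :=
  forall i j, (iota i < iota j)%N = (iota' i < iota' j)%N.

Definition increasing (iota : 'I_k -> 'I_n) : bool :=
  [forall i : 'I_k, forall j : 'I_k, (i < j)%N ==> (iota i < iota j)%N].

Lemma increasing_ltE iota : increasing iota -> forall i j, (iota i < iota j)%N = (i < j)%N.
Proof.
move=> iota_incr; have lt_mono (i j : 'I_k) : (i < j)%N -> (iota i < iota j)%N.
  by move/forallP: iota_incr => /(_ i)/forallP/(_ j)/implyP.
move=> i j; case: (ltngtP i j) => [/lt_mono // | /lt_mono/ltnW | /val_inj ->].
  by rewrite leqNgt => /negbTE.
by rewrite ltnn.
Qed.

Definition ord_rank (iota : 'I_k -> 'I_n) (i : 'I_k) : nat :=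
  #|[set i' | (iota i' < iota i)%N]%SET|.

Lemma ord_rank_lt iota i : (ord_rank iota i < k)%N.
Proof.
have : (ord_rank iota i <= #|[set~ i]%SET|)%N.
  apply/subset_leq_card/fintype.subsetP => j; rewrite !inE.
  by move=> lt_ji; apply/eqP => eq_ji; rewrite eq_ji ltnn in lt_ji.
rewrite cardsC1 card_ord => /leq_ltn_trans; apply.
by rewrite prednK // (leq_ltn_trans _ (ltn_ord i)).
Qed.

Variables (iota : 'I_k -> 'I_n).
Hypothesis iota_inj : injective iota.

Lemma ord_rank_ltE a b : (ord_rank iota a < ord_rank iota b)%N = (iota a < iota b)%N.
Proof.
have rank_lt c e : (iota c < iota e)%N -> (ord_rank iota c < ord_rank iota e)%N.
  move=> ltce; apply/proper_card/properP; split.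
    by apply/fintype.subsetP => j; rewrite !inE => /ltn_trans; apply.
  by exists c; rewrite !inE ?ltce // ltnn.
case: (ltngtP (iota a) (iota b)) => [/rank_lt // | /rank_lt/ltnW | /val_inj/iota_inj ->].
  by rewrite leqNgt => /negbTE.
by rewrite ltnn.
Qed.

Lemma ord_rank_inj a b : ord_rank iota a = ord_rank iota b -> a = b.
Proof.
move=> eq_rank; apply: iota_inj; apply: val_inj.
case: (ltngtP (iota a) (iota b)) => // lt_ab;
  by move: lt_ab; rewrite -ord_rank_ltE eq_rank ltnn.
Qed.

Lemma ord_rank_sorted (pi : 'S_k) r : increasing (iota \o pi) -> ord_rank iota (pi r) = r.
Proof.
move=> incr; rewrite /ord_rank -(card_preimset _ (@perm_inj _ pi)).
have -> : (pi @^-1: [set i' | (iota i' < iota (pi r))%N] =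
           [set r' : 'I_k | (r' < r)%N])%SET.
  by apply/setP => j; rewrite !inE -(increasing_ltE incr).
rewrite -sum1_card (eq_bigl (fun r' : 'I_k => true && (r' < r)%N)) => [|j]; last first.
  by rewrite inE.
rewrite -(big_ord_widen_cond k xpredT (fun _ => 1%N) (ltnW (ltn_ord r))).
by rewrite sum1_card card_ord.
Qed.

Lemma sorting_perm_exists : exists pi : 'S_k, increasing (iota \o pi).
Proof.
pose rk (i : 'I_k) : 'I_k := Ordinal (ord_rank_lt iota i).
have rk_inj : injective rk by move=> a b /(congr1 val) /ord_rank_inj.
exists (perm rk_inj)^-1%g; apply/forallP => r; apply/forallP => r'; apply/implyP.
have rankE i : ord_rank iota ((perm rk_inj)^-1%g i) = i.
  by have := permKV (perm rk_inj) i; rewrite permE => /(congr1 val).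
by rewrite /= -ord_rank_ltE !rankE.
Qed.

Lemma sorting_perm_unique (pi pi' : 'S_k) :
  increasing (iota \o pi) -> increasing (iota \o pi') -> pi = pi'.
Proof.
move=> incr incr'; apply/permP => r; apply: ord_rank_inj.
by rewrite (ord_rank_sorted _ incr) (ord_rank_sorted _ incr').
Qed.

End Sorting.

Lemma ge0_dominated (R : realFieldType) (V u y : R) : 0 < y -> `|V - u * y| < `|u| * y ->
  (0 <= V) = (0 < u).
Proof.
move=> y_gt0; rewrite ltr_norml => /andP[lo hi].
apply/idP/idP => [V_ge0 | u_gt0].
  by rewrite ltNge; apply/negP => u_le0; rewrite ler0_norm // in hi; nra.
by rewrite gtr0_norm // in lo; nra.
Qed.

Section Dominance.
Variables (R : realFieldType) (k : nat) (beta : R) (c : 'I_k -> R).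

Definition dominance_const : R :=
  1 + (\sum_i `|c i|) * (`|beta|^-1 + \sum_i `|c i|^-1).

Lemma dominance_const_ge1 : 1 <= dominance_const.
Proof.
rewrite lerDl mulr_ge0 ?sumr_ge0 ?addr_ge0 ?invr_ge0 //.
by apply: sumr_ge0 => i _; rewrite invr_ge0.
Qed.

Lemma sum_norm_lt_dominance u : u != 0 -> (u = beta \/ exists i, u = c i) ->
  \sum_i `|c i| < dominance_const * `|u|.
Proof.
move=> u_neq0 u_coef; have u_gt0 : 0 < `|u| by rewrite normr_gt0.
have inv_ge0 : 0 <= \sum_i `|c i|^-1 by apply: sumr_ge0 => i _; rewrite invr_ge0.
have inv_le : `|u|^-1 <= `|beta|^-1 + \sum_i `|c i|^-1.
  case: u_coef => [-> | [i ->]]; first by rewrite lerDl.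
  rewrite (bigD1 i) //= addrCA lerDl addr_ge0 ?invr_ge0 //.
  by apply: sumr_ge0 => j _; rewrite invr_ge0.
rewrite mulrDl mul1r -[X in X < _]mulr1 -(mulVf (lt0r_neq0 u_gt0)) mulrA.
by rewrite ltr_pwDl ?mulr_ge0 // ler_pM2r // ler_wpM2l ?sumr_ge0.
Qed.

Variables (n : nat) (K : R).
Hypotheses (K_ge1 : 1 <= K) (K_dom : dominance_const <= K).

Let K_gt0 : 0 < K. Proof. exact: lt_le_trans K_ge1. Qed.

Section OneSequence.
Variables (x : nat -> R) (iota : 'I_k -> 'I_n).
Hypothesis x_sep : separated n K x.

Lemma norm_sum_separated_lt_const : beta != 0 ->
  `|\sum_i c i * x (iota i)| < `|beta|.
Proof.
move=> beta_neq0; have beta_gt0 : 0 < `|beta| by rewrite normr_gt0.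
have [_ _ x_last] := x_sep.
have S_ge0 : 0 <= \sum_i `|c i| by apply: sumr_ge0.
have sum_le : `|\sum_i c i * x (iota i)| <= (\sum_i `|c i|) * x n.-1.
  apply: le_trans (ler_norm_sum _ _ _) _; rewrite mulr_suml.
  apply: ler_sum => i _.
  rewrite normrM (ger0_norm (ltW (separated_gt0 K_ge1 x_sep _))) //.
  by rewrite ler_wpM2l // (separated_le_last K_ge1 x_sep).
have K_sum_le : K * `|\sum_i c i * x (iota i)| <= \sum_i `|c i|.
  apply: le_trans (_ : K * ((\sum_i `|c i|) * x n.-1) <= _).
    by rewrite ler_wpM2l // ltW.
  by rewrite mulrCA ler_piMr // ltW.
rewrite -(ltr_pM2l K_gt0); apply: le_lt_trans K_sum_le _.
apply: lt_le_trans (sum_norm_lt_dominance beta_neq0 (or_introl erefl)) _.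
by rewrite ler_wpM2r // ltW.
Qed.

Lemma norm_sum_separated_lt_top i0 : c i0 != 0 ->
    (forall i, i != i0 -> c i != 0 -> (iota i < iota i0)%N) ->
  `|\sum_i c i * x (iota i) - c i0 * x (iota i0)| < `|c i0| * x (iota i0).
Proof.
move=> ci0_neq0 top_i0; have x_gt0 := separated_gt0 K_ge1 x_sep.
rewrite (bigD1 i0) //= addrAC subrr add0r.
have rest_le : `|\sum_(i | i != i0) c i * x (iota i)| <=
    \sum_(i | i != i0) `|c i| * x (iota i).
  apply: le_trans (ler_norm_sum _ _ _) _; apply: ler_sum => i _.
  by rewrite normrM (ger0_norm (ltW (x_gt0 _ _))).
have K_rest_le : K * \sum_(i | i != i0) `|c i| * x (iota i) <=
    (\sum_i `|c i|) * x (iota i0).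
  rewrite mulr_sumr mulr_suml [X in _ <= X](bigD1 i0) //= ler_wpDl //.
    by rewrite mulr_ge0 // ltW ?x_gt0.
  apply: ler_sum => i ii0; have [-> | ci_neq0] := eqVneq (c i) 0.
    by rewrite normr0 !mul0r mulr0.
  rewrite mulrCA ler_wpM2l // ltW //.
  exact: (separated_lt K_ge1 x_sep (top_i0 i ii0 ci_neq0)).
have sum_lt : (\sum_i `|c i|) * x (iota i0) < K * (`|c i0| * x (iota i0)).
  rewrite mulrA ltr_pM2r ?x_gt0 //.
  have := sum_norm_lt_dominance ci0_neq0 (or_intror (ex_intro _ i0 erefl)).
  by move/lt_le_trans; apply; rewrite ler_wpM2r.
rewrite -(ltr_pM2l K_gt0); apply: le_lt_trans sum_lt; apply: le_trans K_rest_le.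
by rewrite ler_wpM2l // ltW.
Qed.

End OneSequence.

Lemma affine_sign_same_order (x x' : nat -> R) (iota iota' : 'I_k -> 'I_n) :
    separated n K x -> separated n K x' -> injective iota ->
    same_order iota iota' ->
  (0 <= beta + \sum_i c i * x (iota i)) = (0 <= beta + \sum_i c i * x' (iota' i)).
Proof.
move=> x_sep x'_sep iota_inj iota_iota'.
have beta_dom y (ia : 'I_k -> 'I_n) : separated n K y -> beta != 0 ->
    (0 <= beta + \sum_i c i * y (ia i)) = (0 < beta).
  move=> y_sep beta_neq0; apply: (ge0_dominated (y := 1)) => //.
  by rewrite !mulr1 addrAC subrr add0r norm_sum_separated_lt_const.
have [-> | beta_neq0] := eqVneq beta 0; last by rewrite !beta_dom.
rewrite !add0r; case: (pickP (fun i => c i != 0)) => [i1 ci1_neq0 | c_eq0]; last first.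
  by rewrite !big1 // => i _; move/negbFE/eqP: (c_eq0 i) => ->; rewrite mul0r.
have [i0 ci0_neq0 i0_max] :=
  @arg_maxnP _ i1 (fun i => c i != 0) (fun i => val (iota i)) ci1_neq0.
have top_i0 i : i != i0 -> c i != 0 -> (iota i < iota i0)%N.
  move=> ii0 ci_neq0; have /= := i0_max i ci_neq0.
  rewrite leq_eqVlt => /predU1P[/val_inj/iota_inj eq_ii0 | //].
  by rewrite eq_ii0 eqxx in ii0.
have top'_i0 i : i != i0 -> c i != 0 -> (iota' i < iota' i0)%N.
  by move=> ii0 ci_neq0; rewrite -iota_iota' top_i0.
have x_gt0 := separated_gt0 K_ge1 x_sep; have x'_gt0 := separated_gt0 K_ge1 x'_sep.
rewrite (ge0_dominated (x_gt0 _ _) (norm_sum_separated_lt_top x_sep ci0_neq0 top_i0)) //.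
rewrite (ge0_dominated (x'_gt0 _ _) (norm_sum_separated_lt_top x'_sep ci0_neq0 top'_i0)) //.
Qed.

End Dominance.

Section SegmentTuples.
Variables (R : comRingType) (k d : nat) (a b : 'rV[R]_d).

Definition seg_tuple (t : 'I_k -> R) : 'rV[R]_(k * d) :=
  mxvec (\matrix_(i, j) ((1 - t i) * a 0 j + t i * b 0 j)).

Definition seg_dir (i : 'I_k) : 'rV[R]_(k * d) :=
  mxvec (\matrix_(i', j) ((i' == i)%:R * (b 0 j - a 0 j))).

Lemma seg_tupleE t : seg_tuple t = seg_tuple (fun=> 0) + \sum_i t i *: seg_dir i.
Proof.
apply/rowP => l; case/mxvec_indexP: l => i j.
rewrite mxE summxE !mxvecE !mxE.
under eq_bigr do rewrite mxE mxvecE mxE.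
rewrite (bigD1 i) //= big1 ?eqxx => [|i' /negbTE]; last first.
  by rewrite eq_sym => ->; rewrite mul0r mulr0.
by rewrite subr0 !mul1r mul0r !addr0; ring.
Qed.

Lemma seg_tupleB t t' : seg_tuple t - seg_tuple t' = \sum_i (t i - t' i) *: seg_dir i.
Proof.
rewrite [seg_tuple t]seg_tupleE [seg_tuple t']seg_tupleE opprD addrACA subrr add0r.
by rewrite -sumrB; apply: eq_bigr => i _; rewrite scalerBl.
Qed.

Lemma affine_seg_tuple (alpha : 'rV[R]_(k * d)) (beta0 : R) :
  exists (beta : R) (c : 'I_k -> R), forall t,
    \sum_l alpha 0 l * seg_tuple t 0 l + beta0 = beta + \sum_i c i * t i.
Proof.
exists (\sum_l alpha 0 l * seg_tuple (fun=> 0) 0 l + beta0).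
exists (fun i => \sum_l alpha 0 l * seg_dir i 0 l) => t.
rewrite addrAC; congr (_ + _).
under eq_bigr do rewrite seg_tupleE mxE mulrDr summxE.
rewrite big_split /=; congr (_ + _).
under eq_bigr do rewrite mulr_sumr.
rewrite exchange_big /=; apply: eq_bigr => i _.
by rewrite mulr_suml; apply: eq_bigr => l _; rewrite mxE mulrCA mulrC.
Qed.

End SegmentTuples.

Lemma polytope_seg_tuple_same_order (R : realType) (k d n : nat) (a b : 'rV[R]_d)
    (P : set 'rV[R]_(k * d)) :
  polytope P -> exists K0 : R, forall K, K0 <= K ->
  forall (x x' : nat -> R) (iota iota' : 'I_k -> 'I_n),
    separated n K x -> separated n K x' -> injective iota -> same_order iota iota' ->
  P (seg_tuple a b (fun i => x (iota i))) <-> P (seg_tuple a b (fun i => x' (iota' i))).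
Proof.
case=> J [alpha [beta0 ->]].
have affine_row j : exists coef : R * ('I_k -> R), forall t,
    \sum_l alpha j 0 l * seg_tuple a b t 0 l + beta0 j = coef.1 + \sum_i coef.2 i * t i.
  by have [beta [c affE]] := affine_seg_tuple a b (alpha j) (beta0 j); exists (beta, c).
have [coef coefE] := choice affine_row.
exists (1 + \sum_j dominance_const (coef j).1 (coef j).2) => K K0_le_K.
have dom_ge1 j : 1 <= dominance_const (coef j).1 (coef j).2 by apply: dominance_const_ge1.
have K_ge1 : 1 <= K.
  by apply: le_trans K0_le_K; rewrite lerDl sumr_ge0 // => j _; apply: le_trans (dom_ge1 j).
have K_dom j : dominance_const (coef j).1 (coef j).2 <= K.
  apply: le_trans K0_le_K; rewrite (bigD1 j) //= addrCA lerDl addr_ge0 ?sumr_ge0 //.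
  by move=> i _; apply: le_trans (dom_ge1 i).
move=> x x' iota iota' x_sep x'_sep iota_inj iota_iota' /=.
have signE j := affine_sign_same_order K_ge1 (K_dom j) x_sep x'_sep iota_inj iota_iota'.
by split=> inP j; move: (inP j); rewrite !coefE signE.
Qed.

Lemma bound_upward_closed_fin (R : realDomainType) (I : finType) (Q : I -> R -> Prop) :
  (forall i, exists K0, forall K, K0 <= K -> Q i K) -> exists K, 1 <= K /\ forall i, Q i K.
Proof.
move=> /choice[K0 K0P]; exists (1 + \sum_i `|K0 i|); split.
  by rewrite lerDl sumr_ge0.
move=> i; apply: K0P; apply: le_trans (ler_norm _) _.
by rewrite (bigD1 i) //= addrCA lerDl addr_ge0 ?sumr_ge0.
Qed.

Section PermPrefix.
Variables (k n : nat) (hkn : (k <= n)%N).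

Definition perm_prefix (s : 'S_n) (i : 'I_k) : 'I_n := s (widen_ord hkn i).

Lemma perm_prefix_inj s : injective (perm_prefix s).
Proof. by move=> i j /perm_inj/(congr1 val) /= /val_inj. Qed.

Definition extend_fun (pi : 'S_k) (l : 'I_n) : 'I_n :=
  if (insub (val l) : option 'I_k) is Some i then widen_ord hkn (pi i) else l.

Lemma extend_fun_inj pi : injective (extend_fun pi).
Proof.
move=> l l'; rewrite /extend_fun.
case: insubP => [i _ li | l_ge]; case: insubP => [i' _ l'i' | l'_ge] //=.
- move/(congr1 val) => /= /val_inj/perm_inj eq_ii'.
  by apply: val_inj; rewrite -li -l'i' eq_ii'.
- by move=> eq_l; move: l'_ge; rewrite -eq_l /= ltn_ord.
- by move=> eq_l; move: l_ge; rewrite eq_l /= ltn_ord.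
Qed.

Definition extend_perm (pi : 'S_k) : 'S_n := perm (@extend_fun_inj pi).

Lemma extend_permE pi i : extend_perm pi (widen_ord hkn i) = widen_ord hkn (pi i).
Proof. by rewrite permE /extend_fun /= valK. Qed.

Lemma perm_prefix_extendV pi s i :
  perm_prefix ((extend_perm pi)^-1 * s)%g i = perm_prefix s (pi^-1%g i).
Proof. by rewrite /perm_prefix permM -{1}(permKV pi i) -extend_permE permK. Qed.

Lemma sum_perm_by_pattern (V : nmodType) (G : 'S_n -> V) :
  \sum_s G s =
  \sum_(pi : 'S_k) \sum_(s | increasing (perm_prefix s)) G ((extend_perm pi)^-1 * s)%g.
Proof.
have prefixE pi s : perm_prefix (extend_perm pi * s)%g = perm_prefix s \o pi.
  by apply: funext => i; rewrite /perm_prefix /= permM extend_permE.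
transitivity (\sum_s \sum_(pi : 'S_k | increasing (perm_prefix s \o pi)) G s).
  apply: eq_bigr => s _; have [pi0 pi0_sort] := sorting_perm_exists (@perm_prefix_inj s).
  rewrite (big_pred1 pi0) // => pi; apply/idP/eqP => [pi_sort | -> //].
  exact: (sorting_perm_unique (@perm_prefix_inj s) pi_sort pi0_sort).
rewrite (exchange_big_dep xpredT) //=; apply: eq_bigr => pi _.
rewrite [RHS](reindex_inj (mulgI (extend_perm pi))) /=.
by apply: eq_big => [s | s _]; rewrite ?prefixE ?mulKg.
Qed.

(* Each k-subset S of [0, n) is the image of (n - k)! increasing prefixes, and then
   [perm_prefix s j] is the j-th smallest element of S. *)
Definition order_stat_null (R : nmodType) (h : nat -> R) : Prop :=
  forall j : 'I_k, \sum_(s | increasing (perm_prefix s)) h (perm_prefix s j) = 0.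

Lemma janossy_cancel (R : ringType) (V : lmodType R) (T : Type) (rho : 'S_n -> T)
    (Z : T -> 'I_k -> V) (h : nat -> R) :
    (forall s1 s2, same_order (perm_prefix s1) (perm_prefix s2) -> rho s1 = rho s2) ->
    order_stat_null h ->
  \sum_s \sum_i h (perm_prefix s i) *: Z (rho s) i = 0.
Proof.
move=> rho_order h_null; rewrite sum_perm_by_pattern; apply: big1 => pi _.
have rhoE s : increasing (perm_prefix s) ->
    rho ((extend_perm pi)^-1 * s)%g = rho (extend_perm pi)^-1%g.
  move=> s_incr; rewrite -[in RHS](mulg1 (extend_perm pi)^-1%g); apply: rho_order => a b.
  by rewrite !perm_prefix_extendV (increasing_ltE s_incr) /perm_prefix !perm1.
under eq_bigr => s s_incr do rewrite rhoE //.
under eq_bigr do under eq_bigr do rewrite perm_prefix_extendV.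
rewrite exchange_big /=; apply: big1 => i _.
by rewrite -scaler_suml h_null scale0r.
Qed.

End PermPrefix.

Lemma exists_nonzero_left_kernel (R : fieldType) (m n : nat) (M : 'M[R]_(m, n)) :
  (n < m)%N -> exists2 v : 'rV[R]_m, v != 0 & v *m M = 0.
Proof.
move=> lt_nm; exists (nz_row (kermx M)); last first.
  by apply/eqP; rewrite -sub_kermx nz_row_sub.
rewrite nz_row_eq0 -mxrank_eq0 mxrank_ker -lt0n subn_gt0.
exact: leq_ltn_trans (rank_leq_col M) lt_nm.
Qed.

Lemma exists_small_order_stat_null (R : realFieldType) (k n : nat) (hkn : (k < n)%N)
    (eps : R) : 0 < eps ->
  exists h : nat -> R, [/\ order_stat_null (ltnW hkn) h,
    exists2 l, (l < n)%N & h l != 0 & forall l, `|h l| <= eps].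
Proof.
move=> eps_gt0; pose incr (s : 'S_n) := increasing (perm_prefix (ltnW hkn) s).
pose M : 'M[R]_(n, k) :=
  \matrix_(l, j) \sum_(s | incr s) (perm_prefix (ltnW hkn) s j == l)%:R.
have [v v_neq0 vM0] := exists_nonzero_left_kernel M hkn.
pose scale := eps / (1 + \sum_i `|v 0 i|).
have v_ge0 : 0 <= \sum_i `|v 0 i| by apply: sumr_ge0.
have scale_gt0 : 0 < scale by rewrite divr_gt0 // ltr_wpDr.
pose h l := scale * oapp (v 0) 0 (insub l).
have hE (i : 'I_n) : h i = scale * v 0 i by rewrite /h valK.
exists h; split.
- move=> j; transitivity (scale * (v *m M) 0 j); last by rewrite vM0 mxE mulr0.
  rewrite !mxE mulr_sumr; under [RHS]eq_bigr do rewrite mxE !mulr_sumr.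
  rewrite exchange_big /=; apply: eq_bigr => s _.
  rewrite (bigD1 (perm_prefix (ltnW hkn) s j)) //= eqxx mulr1 big1 ?addr0 ?hE // => l.
  by rewrite eq_sym => /negbTE ->; rewrite !mulr0.
- have [l vl_neq0] : exists l, v 0 l != 0.
    apply/existsP; apply: contraR v_neq0 => /existsPn v0.
    by apply/eqP/rowP => l; rewrite mxE; apply/eqP/negbNE/v0.
  by exists l => //; rewrite hE mulf_neq0 // lt0r_neq0.
- move=> l; rewrite /h; case: insubP => [i _ _ | _] /=; last by rewrite mulr0 normr0 ltW.
  rewrite normrM gtr0_norm // -[leRHS](divfK (lt0r_neq0 (ltr_wpDr v_ge0 ltr01))).
  rewrite -/scale ler_wpM2l ?(ltW scale_gt0) //.
  by rewrite (bigD1 i) //= addrCA lerDl addr_ge0 ?sumr_ge0.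
Qed.

Lemma separated_near_geometric (R : realFieldType) (n : nat) (K : R) (y : nat -> R) :
    1 <= K -> (0 < n)%N ->
    (forall l, (l < n)%N -> `|y l - (2 * K)^-1 ^+ (n - l)| <= (2 * K)^-1 ^+ n / 4) ->
  separated n K y.
Proof.
move=> K_ge1 n_gt0 y_near; set eta := (2 * K)^-1; pose g l := eta ^+ (n - l).
have K_gt0 : 0 < K by apply: lt_le_trans K_ge1.
have eta_gt0 : 0 < eta by rewrite invr_gt0 mulr_gt0.
have eta_le1 : eta <= 1 by rewrite invf_le1 ?mulr_gt0 //; lra.
have Keta : K * eta = 2^-1 by rewrite /eta invfM mulrCA mulfV ?mulr1 // gt_eqF.
have g_gt0 l : 0 < g l by rewrite exprn_gt0.
have g_ge l : eta ^+ n <= g l.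
  exact: (ler_wiXn2l (ltW eta_gt0) eta_le1 (leq_subr l n)).
have g_step l : (l.+1 < n)%N -> g l.+1 = 2 * K * g l.
  move=> ltln; rewrite /g -(subnSK (ltnW ltln)) exprS mulrA /eta mulfV ?mul1r //.
  by rewrite gt_eqF // mulr_gt0.
have g_last : g n.-1 = eta by rewrite /g -{1}(prednK n_gt0) subSnn expr1.
have y_near_g l l' : (l' < n)%N -> `|y l' - g l'| <= g l / 4.
  by move=> ltl'n; apply: le_trans (y_near l' ltl'n) _; rewrite ler_pM2r.
have Ky_le l : (l < n)%N -> K * (y l - g l) <= K * (g l / 4).
  by move=> ltln; rewrite ler_pM2l // (le_trans (ler_norm _)) ?(y_near_g l).
split.
- have := y_near_g 0%N 0%N n_gt0; rewrite ler_norml => /andP[y0_lo _].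
  by have := g_gt0 0%N; lra.
- move=> l ltln; have := Ky_le l (ltnW ltln); have := y_near_g l _ ltln.
  rewrite ler_norml g_step // => /andP[y_lo _].
  have := g_gt0 l; have : g l <= K * g l by rewrite ler_peMl // ltW.
  have : 0 < K * g l by rewrite mulr_gt0.
  lra.
- have ltn1n : (n.-1 < n)%N by rewrite ltn_predL.
  by have := Ky_le _ ltn1n; rewrite g_last; lra.
Qed.

Section SegmentConfig.
Variables (R : realType) (d n : nat) (a b : 'rV[R]_d).

Definition seg_config (y : nat -> R) : 'M[R]_(n, d) :=
  \matrix_(l, j) ((1 - y l) * a 0 j + y l * b 0 j).

Lemma row_seg_config y l : row l (seg_config y) = (1 - y l) *: a + y l *: b.
Proof. by apply/rowP => j; rewrite !mxE. Qed.

Lemma janossy_seg_config (k m : nat) (hkn : (k <= n)%N)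
    (f : 'rV[R]_(k * d) -> 'rV[R]_m) y :
  janossy hkn f (seg_config y) =
  ((n - k)`!%:R)^-1 *: \sum_s f (seg_tuple a b (fun i => y (perm_prefix hkn s i))).
Proof.
congr (_ *: _); apply: eq_bigr => s _; congr (f (mxvec _)).
by apply/matrixP => i j; rewrite !mxE.
Qed.

Lemma seg_config_perm_eq (y y' : nat -> R) : a != b ->
    (forall i j, (i < j)%N -> (j < n)%N -> y i < y j) ->
    (forall i j, (i < j)%N -> (j < n)%N -> y' i < y' j) ->
    perm_eq (rows_seq (seg_config y)) (rows_seq (seg_config y')) ->
  forall l, (l < n)%N -> y l = y' l.
Proof.
move=> a_neq_b y_incr y'_incr rows_perm l ltln.
have [j ab_j] : exists j, b 0 j - a 0 j != 0.
  apply/existsP; apply: contraR a_neq_b => /existsPn ab_eq.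
  by apply/eqP/rowP => j; apply/eqP; rewrite eq_sym -subr_eq0; apply/negbNE/ab_eq.
pose coord (r : 'rV[R]_d) := (r 0 j - a 0 j) / (b 0 j - a 0 j).
have coord_rows z : map coord (rows_seq (seg_config z)) = map z (iota 0 n).
  rewrite /rows_seq -map_comp -val_enum_ord -map_comp; apply: eq_map => i /=.
  by rewrite row_seg_config /coord !mxE; field.
have sorted_map (z : nat -> R) : (forall i j, (i < j)%N -> (j < n)%N -> z i < z j) ->
    sorted <%R (map z (iota 0 n)).
  move=> z_incr; apply: (@homo_sorted_in _ _ (gtn n)); last exact: iota_ltn_sorted.
    by move=> i1 lt_i1n i2 lt_i2n /= lt_i12; apply: z_incr.
  by apply/allP => i; rewrite mem_iota.
have := lt_sorted_eq (sorted_map _ y_incr) (sorted_map _ y'_incr).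
rewrite -!coord_rows => /(_ (perm_mem (perm_map coord rows_perm))).
move/(congr1 (nth 0 ^~ l)).
by rewrite !coord_rows !(nth_map 0) ?size_iota // nth_iota.
Qed.

End SegmentConfig.

Section JanossyShift.
Variables (R : realType) (d k m n : nat) (hkn : (k <= n)%N).
Variables (a b : 'rV[R]_d) (f : 'rV[R]_(k * d) -> 'rV[R]_m).
Variables (p : nat) (P : 'I_p -> set 'rV[R]_(k * d)).
Variables (A : 'I_p -> 'M[R]_(k * d, m)) (c : 'I_p -> 'rV[R]_m) (K : R).
Hypotheses (P_cover : forall y, exists i, P i y)
  (f_affine : forall i y, P i y -> f y = y *m A i + c i)
  (P_same_order : forall i (x x' : nat -> R) (iota iota' : 'I_k -> 'I_n),
     separated n K x -> separated n K x' -> injective iota -> same_order iota iota' ->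
     P i (seg_tuple a b (fun j => x (iota j))) <->
     P i (seg_tuple a b (fun j => x' (iota' j)))).

Lemma janossy_seg_config_shift (x h : nat -> R) :
    separated n K x -> separated n K (fun l => x l + h l) -> order_stat_null hkn h ->
  janossy hkn f (seg_config n a b x) =
  janossy hkn f (seg_config n a b (fun l => x l + h l)).
Proof.
move=> x_sep xh_sep h_null; rewrite !janossy_seg_config; congr (_ *: _).
pose tuple y s := seg_tuple a b (fun i => y (perm_prefix hkn s i) : R).
have [i0 _] := P_cover 0.
(* [pick] selects the first piece containing the tuple, so by separation [piece s] depends only
   on the order pattern of [perm_prefix hkn s]. *)
pose piece s := odflt i0 [pick i | `[< P i (tuple x s) >] ].
have pieceP s : P (piece s) (tuple x s).
  rewrite /piece; case: pickP => [i /asboolP // | no_piece].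
  by have [i Pi] := P_cover (tuple x s); move: (no_piece i); rewrite asboolT.
have piece_order s1 s2 : same_order (perm_prefix hkn s1) (perm_prefix hkn s2) ->
    piece s1 = piece s2.
  move=> s12; congr odflt; apply: eq_pick => i; apply: asbool_equiv_eq.
  exact: (P_same_order i x_sep x_sep (@perm_prefix_inj _ _ _ s1) s12).
apply/eqP; rewrite eq_sym -subr_eq0 -sumrB; apply/eqP.
rewrite -[RHS](janossy_cancel (fun i j => seg_dir a b j *m A i) piece_order h_null).
apply: eq_bigr => s _.
have xh_piece : P (piece s) (tuple (fun l => x l + h l) s).
  by apply/(P_same_order (piece s) x_sep xh_sep (@perm_prefix_inj _ _ _ s)) => // ? ?.
rewrite (f_affine xh_piece) (f_affine (pieceP s)) opprD addrACA subrr addr0.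
rewrite -mulmxBl seg_tupleB mulmx_suml; apply: eq_bigr => i _.
by rewrite addrAC subrr add0r scalemxAl.
Qed.

End JanossyShift.

Lemma CPwL_janossy_seg_config_shift (R : realType) (d k m n : nat) (hkn : (k <= n)%N)
    (a b : 'rV[R]_d) (f : 'rV[R]_(k * d) -> 'rV[R]_m) :
  CPwL f -> exists K : R, 1 <= K /\ forall x h : nat -> R,
    separated n K x -> separated n K (fun l => x l + h l) -> order_stat_null hkn h ->
    janossy hkn f (seg_config n a b x) =
    janossy hkn f (seg_config n a b (fun l => x l + h l)).
Proof.
case=> _ [p [P [[P_poly _ P_cup _] f_affine]]].
have affine_piece i : exists Ac : 'M[R]_(k * d, m) * 'rV[R]_m,
    forall y, P i y -> f y = y *m Ac.1 + Ac.2.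
  by have [A [c Ac]] := f_affine i; exists (A, c).
have [Ac AcP] := choice affine_piece.
have P_cover y : exists i, P i y.
  by have : [set: 'rV[R]_(k * d)] y by []; rewrite -P_cup => -[i _ Piy]; exists i.
have [K [K_ge1 P_same_order]] :=
  bound_upward_closed_fin (fun i => polytope_seg_tuple_same_order n a b (P_poly i)).
exists K; split=> // x h.
exact: (janossy_seg_config_shift (A := fun i => (Ac i).1) (c := fun i => (Ac i).2)).
Qed.

Theorem theorem3p1 (R : realType) (d k m n : nat)
    (hd : (1 <= d)%N) (hk : (1 <= k)%N) (hm : (1 <= m)%N) (hkn : (k < n)%N)
    (C : set 'rV[R]_d)
    (hC : exists a b : 'rV[R]_d, a != b /\
          forall t : R, 0 <= t <= 1 -> C ((1 - t) *: a + t *: b))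
    (f : 'rV[R]_(k * d) -> 'rV[R]_m) (hf : CPwL f) :
  exists W W' : 'M[R]_(n, d),
    (forall i, C (row i W)) /\ (forall i, C (row i W')) /\
    ~~ perm_eq (rows_seq W) (rows_seq W') /\
    janossy (ltnW hkn) f W = janossy (ltnW hkn) f W'.
Proof.
have [a [b [a_neq_b segment_in_C]]] := hC.
have [K [K_ge1 F_shift]] := CPwL_janossy_seg_config_shift (ltnW hkn) a b hf.
have n_gt0 : (0 < n)%N := leq_ltn_trans (leq0n k) hkn.
pose x l := (2 * K)^-1 ^+ (n - l).
have eps_gt0 : 0 < (2 * K)^-1 ^+ n / 4.
  by rewrite divr_gt0 // exprn_gt0 // invr_gt0 mulr_gt0 // (lt_le_trans ltr01).
have [h [h_null [l0 l0_lt_n hl0_neq0] h_small]] :=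
  exists_small_order_stat_null hkn eps_gt0.
pose x' l := x l + h l.
have x_sep : separated n K x.
  by apply: separated_near_geometric => // l _; rewrite /x subrr normr0 ltW.
have x'_sep : separated n K x'.
  by apply: separated_near_geometric => // l _; rewrite /x' /x addrAC subrr add0r h_small.
have in_C y : separated n K y -> forall l : 'I_n, C (row l (seg_config n a b y)).
  move=> y_sep l; rewrite row_seg_config; apply: segment_in_C.
  by rewrite ltW ?(separated_gt0 K_ge1 y_sep) ?(separated_le1 K_ge1 y_sep).
exists (seg_config n a b x), (seg_config n a b x').
split; first exact: in_C; split; first exact: in_C; split; last exact: F_shift.
apply/negP => /(seg_config_perm_eq a_neq_b (separated_increasing K_ge1 x_sep)
  (separated_increasing K_ge1 x'_sep)) /(_ l0 l0_lt_n) /eqP.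
by rewrite /x' -subr_eq0 opprD addrA subrr add0r oppr_eq0 (negbTE hl0_neq0).
Qed.
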